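(* For $n\ge 2$ let $D_n(t)=\sum_{\pi\in\mathfrak{D}_n}t^{\mathrm{des}(\pi)}=\sum_{k\ge1}d_{n,k}t^k$. Then for $n\geq 3$, $$D_n(t)=(-1)^nt^{n-1}+(1+(n-1)t)D_{n-1}(t)+t(1-t)D'_{n-1}(t).$$ Equivalently, $d_{n,n-1}=1$ if $n$ is even, $d_{n,n-1}=0$ if $n$ is odd, and $d_{n,k}=(k+1)d_{n-1,k}+(n-k)d_{n-1,k-1}$ if $k\neq n-1$.
   Context: $\mathfrak{D}_n$ is the set of derangements (fixed-point-free permutations) of $[n]$, and $\mathrm{des}(\pi)=\#\{i\in[n-1]:\pi_i>\pi_{i+1}\}$. $D'_{n-1}$ denotes the derivative in $t$. *)

From mathcomp Require Import all_boot all_order all_fingroup all_algebra.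
Set Implicit Arguments. Unset Strict Implicit. Unset Printing Implicit Defensive.
Import GRing.Theory.
Local Open Scope ring_scope.

(* Permutations of [n] are modelled as permutations of 'I_n = {0,...,n-1};
   the one-line notation is pi_{i+1} = s i. *)

Definition derangement (n : nat) (s : 'S_n) : bool := [forall i, s i != i].

Definition des (n : nat) (s : 'S_n) : nat :=
  #|[set ij : 'I_n * 'I_n | (ij.2 == ij.1.+1 :> nat) && (s ij.2 < s ij.1)%N]|.

Definition Dpoly (n : nat) : {poly int} :=
  \sum_(s : 'S_n | derangement s) 'X^(des s).

(* Write P(n,f) for the sum of t^des over the permutations of [n] with exactly f fixed
   points, so that D_n = P(n,0), and T_n p = (1 + (n-1)t) p + t(1-t) p'.
   Inserting a new fixed point at each of the n+1 positions of a permutation with f fixed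
   points yields every permutation with f+1 fixed points exactly f+1 times; the descent
   number goes up by 0 or 1 according to the excedance, deficiency and descent at the
   insertion point, which gives (f+1) P(n+1,f+1) = (T_{n+1} + f(1-t)) P(n,f).  Inserting
   the value n+1 instead gives the Eulerian recurrence A_{n+1} = T_{n+1} A_n for
   A_n = sum_f P(n,f).  By induction on n, P(n+1,f) = T_{n+1} P(n,f) + c(n+1,f) with
   c(n,f) = b(n,f) - b(n,f+1) and b(n,g+1) = (-1)^(n-1-g) C(n-1,g) t^(n-1-g): for f > 0
   because the operators T_{n+1} + f(1-t) commute with T up to a shift of index and c
   obeys the same relation, and for f = 0 because the c(n,f) telescope to 0.  The
   theorem is the case f = 0, where c(n,0) = (-1)^n t^(n-1). *)

From HB Require Import structures.
From mathcomp Require Import all_boot all_order all_fingroup all_algebra.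
From mathcomp Require Import ring zify.
Import GRing.Theory Num.Theory.
Local Open Scope ring_scope.

Section DescentOperators.

Context {R : comNzRingType}.
Implicit Types (p q : {poly R}) (n m g k : nat).

Definition eulerian_op n p : {poly R} :=
  (1 + (n.-1)%:R *: 'X) * p + 'X * (1 - 'X) * p^`().

Definition fixins_op n g p : {poly R} := eulerian_op n p + g%:R *: ((1 - 'X) * p).

Lemma eulerian_op_is_linear n : linear (eulerian_op n).
Proof. by move=> a p q; rewrite /eulerian_op derivD derivZ -!mul_polyC; ring. Qed.

HB.instance Definition _ n :=
  GRing.isLinear.Build R {poly R} {poly R} _ (eulerian_op n) (eulerian_op_is_linear n).

Lemma fixins_op_is_linear n g : linear (fixins_op n g).
Proof.
by move=> a p q; rewrite /fixins_op linearP /= -!mul_polyC; ring.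
Qed.

HB.instance Definition _ n g :=
  GRing.isLinear.Build R {poly R} {poly R} _ (fixins_op n g) (fixins_op_is_linear n g).

Lemma sum_Xn_shift (I : finType) (D c t : I -> nat) d :
  (forall a, D a + c a = d + t a)%N -> (forall a, c a <= t a <= (c a).+1)%N ->
  \sum_a 'X^(D a) =
  #|I|%:R *: 'X^d + ((\sum_a t a)%:R - (\sum_a c a)%:R) *: ('X^(d.+1) - 'X^d) :> {poly R}.
Proof.
move=> eD bD.
have term a : 'X^(D a) = 'X^d + ((t a)%:R - (c a)%:R) *: ('X^(d.+1) - 'X^d) :> {poly R}.
  have [[-> ->]|[-> ->]] : D a = d /\ t a = c a \/ D a = d.+1 /\ t a = (c a).+1.
    by have := eD a; have := bD a; lia.
    by rewrite subrr scale0r addr0.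
  by rewrite mulrSr addrAC subrr add0r scale1r addrC subrK.
rewrite (eq_bigr _ (fun a _ => term a)) big_split /= sumr_const -scaler_suml sumrB.
by rewrite !natr_sum scaler_nat.
Qed.

Lemma eulerian_opXn n k :
  eulerian_op n 'X^k = k.+1%:R *: 'X^k + ((n.-1)%:R - k%:R : R) *: 'X^(k.+1).
Proof.
rewrite /eulerian_op derivXn -!mul_polyC polyCB !polyC_natr.
case: k => [|k]; first by rewrite mulr0n !mulr0; ring.
by rewrite /= !exprS; ring.
Qed.

Lemma fixins_opXn n g k :
  fixins_op n g 'X^k =
  (k.+1 + g)%:R *: 'X^k + ((n.-1)%:R - k%:R - g%:R : R) *: 'X^(k.+1).
Proof.
by rewrite /fixins_op eulerian_opXn -!mul_polyC !polyCB !polyC_natr natrD exprS; ring.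
Qed.

Lemma eulerian_op_mul1BX m p :
  eulerian_op m.+2 ((1 - 'X) * p) = (1 - 'X) * eulerian_op m.+1 p.
Proof.
rewrite /eulerian_op derivM derivB derivX -polyC1 derivC -!mul_polyC polyC1 !polyC_natr.
by rewrite /= -[m.+1]addn1 natrD; ring.
Qed.

Lemma fixins_op_eulerian_op m g p :
  fixins_op m.+2 g (eulerian_op m.+1 p) = eulerian_op m.+2 (fixins_op m.+1 g p).
Proof.
by rewrite /fixins_op [RHS]linearD /= linearZ /= eulerian_op_mul1BX -!mul_polyC; ring.
Qed.

Definition alt_binX n f : {poly R} :=
  if f is g.+1 then ((-1) ^+ (n.-1 - g) * 'C(n.-1, g)%:R) *: 'X^(n.-1 - g) else 0.

Arguments alt_binX : simpl never.

Definition defect n f : {poly R} := alt_binX n f - alt_binX n f.+1.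

Lemma scale_alt_binXS m g : g%:R *: alt_binX m.+2 g.+1 = m.+1%:R *: alt_binX m.+1 g.
Proof.
case: g => [|g]; first by rewrite /alt_binX scale0r scaler0.
rewrite /alt_binX /= subSS !scalerA; congr (_ *: _).
by rewrite mulrCA [RHS]mulrCA -!natrM mul_bin_diag.
Qed.

Lemma fixins_op_alt_binX m g :
  fixins_op m.+2 g (alt_binX m.+1 g) = m.+2%:R *: alt_binX m.+1 g.
Proof.
case: g => [|g]; first by rewrite /alt_binX linear0 scaler0.
rewrite /alt_binX /= linearZ /=.
have [gm|mg] := leqP g m; last by rewrite bin_small // mulr0 !scale0r scaler0.
rewrite fixins_opXn.
have -> : ((m.+2).-1%:R - (m - g)%:R - g.+1%:R : R) = 0.
  by rewrite natrB // -addn1 -[g.+1]addn1 !natrD /=; ring.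
rewrite scale0r addr0 !scalerA [in RHS]mulrC; congr (_ * _%:R *: _); lia.
Qed.

Lemma fixins_op_alt_binXS m g :
  fixins_op m.+2 g (alt_binX m.+1 g.+1) =
  m.+1%:R *: alt_binX m.+1 g.+1 - (alt_binX m.+2 g.+1 - alt_binX m.+1 g).
Proof.
have [gm|mg] := leqP g m; last first.
  rewrite /alt_binX /= bin_small // mulr0 scale0r linear0 scaler0 sub0r.
  case: g mg => [|g] //= mg.
  have [mg'|gm'|->] := ltngtP g m; first lia.
    by rewrite !bin_small // ?mulr0 ?scale0r ?subrr ?oppr0.
  by rewrite !subnn !binn subrr oppr0.
rewrite /alt_binX /= linearZ /=.
have [k ->] : exists k, m = (g + k)%N by exists (m - g)%N; lia.
have -> : (g + k - g = k)%N by lia.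
have -> : ((g + k).+1 - g = k.+1)%N by lia.
rewrite fixins_opXn.
have -> : ((g + k).+2.-1%:R - k%:R - g%:R : R) = 1.
  by rewrite /= -[(g + k).+1]addn1 !natrD; ring.
case: g {gm} => [|g].
  by rewrite !add0n !bin0 addn0 subr0 -!mul_polyC !(polyCM, polyC_natr) !exprS; ring.
have -> : (g.+1 + k - g = k.+1)%N by lia.
rewrite -[(g.+1 + k).+1]addSn binS -!mul_polyC.
by rewrite !(polyCM, polyCB, polyCD, polyC_natr, rmorphXn, rmorphN1, natrD, exprS); ring.
Qed.

Lemma fixins_op_defect m g :
  fixins_op m.+2 g (defect m.+1 g) = g.+1%:R *: defect m.+2 g.+1.
Proof.
rewrite /defect linearB /= fixins_op_alt_binX fixins_op_alt_binXS scalerBr.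
rewrite (scale_alt_binXS m g.+1) [g.+1%:R]mulrSr [m.+2%:R]mulrSr.
by rewrite !scalerDl !scale1r scale_alt_binXS -!mul_polyC; ring.
Qed.

Lemma sum_defect m : \sum_(f < m.+2) defect m.+1 f = 0.
Proof.
rewrite (eq_bigr (fun f : 'I_m.+2 => - (alt_binX m.+1 f.+1 - alt_binX m.+1 f))); last first.
  by move=> f _; rewrite /defect opprB.
rewrite sumrN -(big_mkord xpredT (fun f => alt_binX m.+1 f.+1 - alt_binX m.+1 f)).
by rewrite telescope_sumr // /alt_binX /= bin_small // mulr0 scale0r subr0 oppr0.
Qed.

Lemma defect0 m : defect m.+1 0 = (-1) ^+ m.+1 *: 'X^m.
Proof. by rewrite /defect /alt_binX /= subn0 bin0 mulr1 sub0r exprS mulN1r scaleNr. Qed.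

End DescentOperators.

Local Open Scope nat_scope.

(* [s] read as a function on nat; the value 0 outside [0, n) is never used. *)
Definition pval n (s : 'S_n) (i : nat) : nat :=
  if insub i is Some x then val (s x) else 0.
Arguments pval {n}.

Lemma pvalE n (s : 'S_n) (x : 'I_n) : pval s x = s x.
Proof. by rewrite /pval valK. Qed.
Arguments pvalE {n}.

Definition desn (u : nat -> nat) (n : nat) : nat := \sum_(0 <= i < n.-1) (u i.+1 < u i).

Lemma des_desn n (s : 'S_n) : des s = desn (pval s) n.
Proof.
rewrite /des -sum1dep_card.
rewrite (_ : \sum_(ij | _) 1 =
  \sum_(i : 'I_n) \sum_(j : 'I_n | (j == i.+1 :> nat) && (s j < s i)) 1); last first.
  by rewrite pair_big_dep; apply: eq_bigl.
rewrite (eq_bigr (fun i : 'I_n => ((i.+1 < n) && (pval s i.+1 < pval s i) : nat))); last first.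
  move=> i _; have [lt_i1n|] := ltnP i.+1 n; last first.
    move=> le_n_i1; rewrite big_pred0 // => j; apply/negbTE/negP => /andP[/eqP ji _].
    by have := ltn_ord j; rewrite ji ltnNge le_n_i1.
  rewrite big_mkcondr (bigD1 (Ordinal lt_i1n)) ?eqxx //= big1 ?addn0; last first.
    by move=> j /andP[/eqP ji]; apply: contraNeq => _; apply/eqP/val_inj.
  by rewrite (pvalE s (Ordinal lt_i1n)) pvalE; case: (_ < _).
rewrite -(big_mkord xpredT (fun i => ((i.+1 < n) && (pval s i.+1 < pval s i) : nat))).
case: n s => [|n] s; first by rewrite /desn !big_geq.
rewrite big_nat_recr //= ltnn addn0.
by apply: eq_big_nat => i /andP[_ lt_in]; rewrite ltnS lt_in.
Qed.

Lemma desn_insert (u u' h : nat -> nat) (m p v : nat) :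
  p <= m -> {mono h : x y / x < y} ->
  (forall i, i < p -> u' i = h (u i)) -> u' p = v ->
  (forall i, p < i <= m -> u' i = h (u i.-1)) ->
  desn u' m.+1 + ((0 < p < m) && (u p < u p.-1)) =
  desn u m + ((0 < p) && (v < h (u p.-1))) + ((p < m) && (h (u p) < v)).
Proof.
move=> le_pm hmono u'_lo u'_p u'_hi; rewrite /desn /=.
have hi_part : \sum_(p.+1 <= i < m) (u' i.+1 < u' i) = \sum_(p <= i < m.-1) (u i.+1 < u i).
  rewrite big_add1; apply: eq_big_nat => i /andP[lt_pi lt_im].
  by rewrite (u'_hi i.+2) ?(u'_hi i.+1) ?hmono //; lia.
have lo_part : \sum_(0 <= i < p.-1) (u' i.+1 < u' i) = \sum_(0 <= i < p.-1) (u i.+1 < u i).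
  by apply: eq_big_nat => i /andP[_ lt_ip]; rewrite !u'_lo ?hmono //; lia.
rewrite (@big_cat_nat _ _ _ p) //= (@big_cat_nat _ _ _ p.-1 0 m.-1) //=; last by lia.
case: p le_pm u'_lo u'_p u'_hi hi_part lo_part
  => [|q] le_pm u'_lo u'_p u'_hi hi_part lo_part.
  rewrite big_geq // add0n addn0 /=.
  have [->|m_gt0] := posnP m; first by rewrite !big_geq.
  by rewrite big_ltn // hi_part /= u'_p (u'_hi 1) //= [\sum_(0 <= i < 0) _]big_geq //; lia.
rewrite /= in lo_part; rewrite big_nat_recr //= lo_part u'_p (u'_lo q) //=.
have [lt_qm|lt_mq|eq_qm] := ltngtP q.+1 m; last 2 first.
- by move: le_pm; rewrite leqNgt lt_mq.
- rewrite -eq_qm /= [\sum_(q.+1 <= i < q.+1) _]big_geq //.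
  by rewrite [\sum_(q <= i < q) _]big_geq //; lia.
rewrite [\sum_(q.+1 <= i < m) _]big_ltn // hi_part (u'_hi q.+2) /=; last by lia.
by rewrite [\sum_(q <= i < m.-1) _]big_ltn; lia.
Qed.

Lemma ltn_bump2 h i j : (bump h i < bump h j) = (i < j).
Proof. by rewrite !ltnNge leq_bump2. Qed.

Lemma ltn_pivot_bump h i : (h < bump h i) = (h <= i).
Proof. by rewrite /bump; case: leqP => /=; lia. Qed.

Lemma ltn_bump_pivot h i : (bump h i < h) = (i < h).
Proof. by rewrite /bump; case: leqP => /=; lia. Qed.

Definition nfix n (s : 'S_n) : nat := \sum_(i < n) (s i == i).
Arguments nfix {n}.

Section LiftPerm.

Context {m : nat} (s : 'S_m).

(* For insertion at position p: [desc_at p] is the descent of s between positions p-1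
   and p, [exc_at p] says that p-1 is an excedance and [defic_at p] that p is a
   deficiency of s. *)
Definition desc_at p := (0 < p < m) && (pval s p < pval s p.-1).

Lemma pval_lt k : k < m -> pval s k < m.
Proof. by move=> lt_km; rewrite -[k]/(val (Ordinal lt_km)) pvalE. Qed.

Lemma pval_lift_perm (i j : 'I_m.+1) k : k < m ->
  pval (lift_perm i j s) (bump i k) = bump j (pval s k).
Proof.
move=> lt_km; rewrite -[bump i k]/(val (lift i (Ordinal lt_km))) pvalE lift_perm_lift /=.
by rewrite -(pvalE s (Ordinal lt_km)).
Qed.

Lemma des_lift_perm (i j : 'I_m.+1) :
  des (lift_perm i j s) + desc_at i =
  des s + ((0 < i) && (j < bump j (pval s i.-1))) + ((i < m) && (bump j (pval s i) < j)).
Proof.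
rewrite !des_desn; apply: desn_insert.
- by rewrite -ltnS.
- exact: ltn_bump2.
- move=> k lt_ki; have lt_km : k < m by have := ltn_ord i; lia.
  by rewrite -(pval_lift_perm i j) // /bump leqNgt lt_ki.
- by rewrite pvalE lift_perm_id.
- move=> k /andP[lt_ik le_km]; have lt_k1m : k.-1 < m by lia.
  rewrite -(pval_lift_perm i j) //; congr pval; rewrite /bump; case: leqP => /=; lia.
Qed.

Lemma sum_desc_at : \sum_(p < m.+1) desc_at p = des s.
Proof.
rewrite des_desn /desn -(big_mkord xpredT (fun p => desc_at p : nat)) /desc_at.
rewrite big_nat_recl //= add0n; case: m s => [|k] s'; first by rewrite !big_geq.
rewrite big_nat_recr //= ltnn /= addn0.
by apply: eq_big_nat => i /andP[_ lt_ik]; rewrite ltnS lt_ik.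
Qed.

Lemma des_lift_perm_max (p : 'I_m.+1) :
  des (lift_perm p ord_max s) + desc_at p = des s + (p < m).
Proof.
have lo : (0 < p) && (m < bump m (pval s p.-1)) = false.
  have [->|p_gt0] //= := posnP p.
  have lt_p1m : p.-1 < m by have := ltn_ord p; lia.
  by rewrite /bump [m <= _]leqNgt pval_lt //= add0n ltnNge ltnW ?pval_lt.
have hi : (p < m) && (bump m (pval s p) < m) = (p < m).
  by case: ltnP => //= lt_pm; rewrite /bump [m <= _]leqNgt pval_lt //= add0n pval_lt.
by have := des_lift_perm p ord_max; rewrite lo hi addn0.
Qed.

Definition exc_at p := (0 < p) && (p <= pval s p.-1).

Definition defic_at p := (p < m) && (pval s p < p).

Lemma des_lift_perm_fix (p : 'I_m.+1) :
  des (lift_perm p p s) + desc_at p = des s + (exc_at p + defic_at p).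
Proof. by rewrite des_lift_perm ltn_pivot_bump ltn_bump_pivot -addnA. Qed.

Lemma desc_at_fix_bounds p : desc_at p <= exc_at p + defic_at p <= (desc_at p).+1.
Proof.
rewrite /desc_at /exc_at /defic_at.
have [->|p_gt0] /= := posnP p; first by rewrite ltn0 andbF.
case: (p < m); case: (ltnP (pval s p) (pval s p.-1)); case: (leqP p (pval s p.-1));
  by case: (ltnP (pval s p) p) => //=; lia.
Qed.

Lemma sum_exc_defic_nfix :
  \sum_(p < m.+1) exc_at p + \sum_(p < m.+1) defic_at p + nfix s = m.
Proof.
rewrite big_ord_recl big_ord_recr /= /exc_at /defic_at ltnn /= add0n addn0.
rewrite /nfix -!big_split /= -[m in RHS]card_ord -sum1_card.
apply: eq_bigr => i _; rewrite /exc_at /defic_at /= ltn_ord /bump /= add1n add0n pvalE.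
by rewrite -val_eqE /=; case: ltngtP.
Qed.

End LiftPerm.

Local Open Scope ring_scope.

Lemma big_perm_lift (V : nmodType) m (i j : 'I_m.+1) (F : 'S_m.+1 -> V) :
  \sum_(s : 'S_m.+1 | s i == j) F s = \sum_(s : 'S_m) F (lift_perm i j s).
Proof.
rewrite (reindex (lift_perm i j)); last first.
  pose ulsf i0 (s : 'S_m.+1) k := odflt k (unlift (s i0) (s (lift i0 k))).
  have ulsfK i0 (s : 'S_m.+1) k : lift (s i0) (ulsf i0 s k) = s (lift i0 k).
    rewrite /ulsf; have := neq_lift i0 k.
    by rewrite -(can_eq (permK s)) => /unlift_some[] ? ? ->.
  have inj_ulsf : injective (ulsf i _).
    move=> s; apply: can_inj (ulsf (s i) s^-1%g) _ => k'.
    by rewrite {1}/ulsf ulsfK !permK liftK.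
  exists (fun s => perm (inj_ulsf s)) => [s _ | s].
    by apply/permP => k'; rewrite permE /ulsf lift_perm_lift lift_perm_id liftK.
  move/(s _ =P _) => si0; apply/permP => k.
  case: (unliftP i k) => [k'|] ->; rewrite ?lift_perm_id //.
  by rewrite lift_perm_lift -si0 permE ulsfK.
by apply: eq_bigl => s; rewrite lift_perm_id eqxx.
Qed.

Lemma nfix_lift_perm m (p : 'I_m.+1) (s : 'S_m) : nfix (lift_perm p p s) = (nfix s).+1.
Proof.
rewrite /nfix (bigD1_ord p) //= lift_perm_id eqxx add1n; congr _.+1.
by apply: eq_bigr => k _; rewrite lift_perm_lift (inj_eq lift_inj).
Qed.

Section InsertionSums.

Context {R : comNzRingType} {m : nat} (s : 'S_m).

Lemma sum_lift_perm_fix :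
  \sum_(p : 'I_m.+1) 'X^(des (lift_perm p p s)) = fixins_op m.+1 (nfix s) 'X^(des s)
  :> {poly R}.
Proof.
rewrite (@sum_Xn_shift R _ _ (fun p : 'I_m.+1 => desc_at s p : nat)
                              (fun p => exc_at s p + defic_at s p)%N (des s)); last 2 first.
- exact: des_lift_perm_fix.
- exact: desc_at_fix_bounds.
have sum_t :
    ((\sum_(p < m.+1) (exc_at s p + defic_at s p))%N%:R : R) = m%:R - (nfix s)%:R.
  have := congr1 (fun k => k%:R : R) (sum_exc_defic_nfix s).
  by rewrite big_split !natrD => <-; rewrite addrK.
rewrite sum_t sum_desc_at card_ord fixins_opXn -!mul_polyC.
by rewrite !(polyCB, polyCD, polyC_natr, natrD, exprS); ring.
Qed.

Lemma sum_lift_perm_max :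
  \sum_(p : 'I_m.+1) 'X^(des (lift_perm p ord_max s)) = eulerian_op m.+1 'X^(des s)
  :> {poly R}.
Proof.
rewrite (@sum_Xn_shift R _ _ (fun p : 'I_m.+1 => desc_at s p : nat)
                              (fun p => p < m : nat)%N (des s)); last 2 first.
- exact: des_lift_perm_max.
- by move=> p; rewrite /desc_at; case: (p < m)%N; rewrite ?andbF ?andbT ?leq_b1.
have sum_t : (\sum_(p < m.+1) (p < m) = m)%N.
  rewrite big_ord_recr /= ltnn addn0 -[m in RHS]card_ord -sum1_card.
  by apply: eq_bigr => i _; rewrite ltn_ord.
rewrite sum_t sum_desc_at card_ord eulerian_opXn -!mul_polyC.
by rewrite !(polyCB, polyCD, polyC_natr, natrD, exprS); ring.
Qed.

End InsertionSums.

Definition Dfix n f : {poly int} := \sum_(s : 'S_n | nfix s == f) 'X^(des s).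

Definition eulerian n : {poly int} := \sum_(s : 'S_n) 'X^(des s).

Lemma Dpoly_Dfix n : Dpoly n = Dfix n 0.
Proof.
apply: eq_bigl => s; rewrite /derangement /nfix sum_nat_eq0.
by apply: eq_forallb => i; case: (s i == i).
Qed.

Lemma nfix_le {n} (s : 'S_n) : (nfix s <= n)%N.
Proof. by rewrite -[leqRHS]card_ord -sum1_card leq_sum // => i _; case: (_ == _). Qed.

Lemma sum_Dfix {n N} : (n < N)%N -> \sum_(f < N) Dfix n f = eulerian n.
Proof.
move=> lt_nN; rewrite /Dfix /eulerian (exchange_big_dep xpredT) //=.
apply: eq_bigr => s _; have lt_fN : (nfix s < N)%N := leq_ltn_trans (nfix_le s) lt_nN.
by rewrite (big_pred1 (Ordinal lt_fN)) // => f; rewrite /= -val_eqE eq_sym.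
Qed.

Lemma Dfix0 f : Dfix 0 f = (f == 0%N)%:R.
Proof.
have des0 (s : 'S_0) : des s = 0%N.
  by apply/eqP; rewrite cards_eq0; apply/eqP/setP => [[[]]].
rewrite /Dfix (eq_bigl (fun _ => f == 0%N)) => [|s]; last by rewrite /nfix big_ord0 eq_sym.
case: eqP => _; last by rewrite big_pred0.
by rewrite (eq_bigr (fun _ => 1)) => [|s _]; rewrite ?des0 // sumr_const card_Sn.
Qed.

Lemma Dfix_lift_fix m f : f.+1%:R *: Dfix m.+1 f.+1 = fixins_op m.+1 f (Dfix m f).
Proof.
rewrite /Dfix scaler_sumr linear_sum.
transitivity (\sum_(p : 'I_m.+1) \sum_(s : 'S_m.+1 | s p == p)
                 (if nfix s == f.+1 then 'X^(des s) else 0 : {poly int})).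
  rewrite (exchange_big_dep xpredT) //= big_mkcond /=; apply: eq_bigr => s _.
  case: (nfix s =P f.+1) => [<-|_]; last by rewrite big1.
  rewrite /nfix natr_sum scaler_suml [RHS]big_mkcond; apply: eq_bigr => p _.
  by case: eqP; rewrite ?scale1r ?scale0r.
rewrite (eq_bigr (fun p : 'I_m.+1 =>
  \sum_(s : 'S_m | nfix s == f) ('X^(des (lift_perm p p s)) : {poly int}))); last first.
  move=> p _; rewrite big_perm_lift [RHS]big_mkcond; apply: eq_bigr => s _.
  by rewrite nfix_lift_perm eqSS.
rewrite (exchange_big_dep xpredT) //= [RHS]big_mkcond; apply: eq_bigr => s _.
case: (nfix s =P f) => [<-|_]; last by rewrite big_pred0.
by rewrite (eq_bigl xpredT) ?sum_lift_perm_fix // => p; rewrite eqxx.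
Qed.

Lemma eulerianS m : eulerian m.+1 = eulerian_op m.+1 (eulerian m).
Proof.
rewrite /eulerian linear_sum.
transitivity (\sum_(a : 'I_m.+1) \sum_(s : 'S_m.+1 | s a == ord_max) ('X^(des s) : {poly int})).
  rewrite (exchange_big_dep xpredT) //=; apply: eq_bigr => s _.
  rewrite (big_pred1 ((s^-1)%g ord_max)) // => a.
  by rewrite /= (can2_eq (permK s) (permKV s)).
rewrite (eq_bigr (fun a => \sum_(s : 'S_m) 'X^(des (lift_perm a ord_max s)))) => [|a _].
  by rewrite exchange_big /=; apply: eq_bigr => s _; rewrite sum_lift_perm_max.
exact: big_perm_lift.
Qed.

Lemma scaler_natS_inj k : injective (fun p : {poly int} => k.+1%:R *: p).
Proof.
move=> p q /= /eqP; rewrite -subr_eq0 -scalerBr scale_poly_eq0 pnatr_eq0 subr_eq0.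
by move/eqP.
Qed.

Lemma DfixSS_succ m :
  (forall f, Dfix m.+1 f = eulerian_op m.+1 (Dfix m f) + defect m.+1 f) ->
  forall g, Dfix m.+2 g.+1 = eulerian_op m.+2 (Dfix m.+1 g.+1) + defect m.+2 g.+1.
Proof.
move=> DfixS g; apply: (@scaler_natS_inj g).
rewrite Dfix_lift_fix DfixS linearD /= fixins_op_defect fixins_op_eulerian_op -Dfix_lift_fix.
by rewrite linearZ /= [RHS]scalerDr.
Qed.

Lemma DfixS_zero m :
  (forall g, Dfix m.+1 g.+1 = eulerian_op m.+1 (Dfix m g.+1) + defect m.+1 g.+1) ->
  Dfix m.+1 0 = eulerian_op m.+1 (Dfix m 0) + defect m.+1 0.
Proof.
move=> DfixS.
have Dfix_zero n : (n <= m.+1)%N -> Dfix n 0 = eulerian n - \sum_(i < m.+1) Dfix n i.+1.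
  by move=> le_nm1; rewrite -(sum_Dfix (N := m.+2) le_nm1) big_ord_recl addrK.
have defect_zero : defect m.+1 0 = - \sum_(i < m.+1) defect m.+1 i.+1 :> {poly int}.
  by apply/eqP; rewrite -addr_eq0; have := @sum_defect int m; rewrite big_ord_recl => ->.
rewrite !Dfix_zero // eulerianS defect_zero.
under eq_bigr do rewrite DfixS.
by rewrite big_split linearB /= [eulerian_op _ (\sum_(i < m.+1) _)]linear_sum opprD addrA.
Qed.

Lemma Dfix1_succ g : Dfix 1 g.+1 = eulerian_op 1 (Dfix 0 g.+1) + defect 1 g.+1.
Proof.
rewrite [Dfix 0 _]Dfix0 linear0 add0r; apply: (@scaler_natS_inj g).
rewrite Dfix_lift_fix Dfix0 /defect /alt_binX /=.
case: g => [|g] /=.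
  rewrite -(expr0 'X) fixins_opXn bin0 bin_small // !subr0 /= !mulr1 !scale1r.
  by rewrite !mulr0 scale0r addr0 scale0r subr0.
by rewrite linear0 !bin_small // !mulr0 !scale0r subrr scaler0.
Qed.

Lemma DfixS n f : Dfix n.+1 f = eulerian_op n.+1 (Dfix n f) + defect n.+1 f.
Proof.
elim: n f => [|n IHn] [|g].
- by apply: DfixS_zero => g; apply: Dfix1_succ.
- exact: Dfix1_succ.
- by apply: DfixS_zero => g; apply: DfixSS_succ IHn g.
- exact: DfixSS_succ IHn g.
Qed.

Theorem lemma4p1 (n : nat) : (3 <= n)%N ->
  Dpoly n = (-1) ^+ n *: 'X^(n.-1)
            + (1 + (n.-1)%:R *: 'X) * Dpoly n.-1
            + 'X * (1 - 'X) * (Dpoly n.-1)^`().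
Proof.
case: n => [//|m] _; rewrite !Dpoly_Dfix DfixS defect0 /eulerian_op /=.
by rewrite addrC addrA.
Qed.
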